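(* As $N\to\infty$, $$\min\Big\{\big\|\sqrt m-\sqrt n\big\| : 1\le m,n\le N,\ m\ne n,\ \sqrt m\notin\mathbb{Z},\ \sqrt n\notin\mathbb{Z}\Big\}\sim\frac{1}{2N^{3/2}}.$$
   Context: For $x\in\mathbb{R}$, $\|x\|=\min_{k\in\mathbb{Z}}|x-k|$ denotes the distance to the nearest integer. $f(N)\sim g(N)$ means $f(N)/g(N)\to1$. *)

From Stdlib Require Import Reals List ClassicalDescription.
From Coquelicot Require Import Coquelicot.
Import ListNotations.
Open Scope R_scope.

(* ||x|| = min_{k in Z} |x - k|: the minimum is attained at floor x or floor x + 1
   (Int_part x is the floor of x). *)
Definition distZ (x : R) : R :=
  Rmin (Rabs (x - IZR (Int_part x))) (Rabs (x - IZR (Int_part x + 1))).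

Definition notZ (x : R) : Prop := forall k : Z, x <> IZR k.

(* admissible pair (m,n) with 1 <= m,n <= N is enforced by ranging over seq 1 N *)
Definition adm (m n : nat) : Prop :=
  m <> n /\ notZ (sqrt (INR m)) /\ notZ (sqrt (INR n)).

Definition vals (N : nat) : list R :=
  flat_map (fun m =>
    flat_map (fun n =>
      if excluded_middle_informative (adm m n)
      then [distZ (sqrt (INR m) - sqrt (INR n))] else [])
    (seq 1 N))
  (seq 1 N).

(* the minimum of that (finite) set; the value 0 for an empty set (N <= 2) is
   irrelevant for the asymptotic statement *)
Definition delta (N : nat) : R :=
  match vals N with
  | [] => 0
  | x :: l => fold_right Rmin x l
  end.

(* Let x = sqrt m, y = sqrt n and let k be the integer nearest to x - y.  The product of
   the four conjugates (x - y - k)(x + y - k)(x + y + k)(x - y + k) equals the integer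
   (m + k^2 - n)^2 - 4 k^2 m, and it is nonzero: x - y or x + y being an integer would make
   sqrt n rational, hence an integer.  The last three factors are at most about 2 sqrt N,
   sqrt N, sqrt N in size, so ||sqrt m - sqrt n|| >= 1 / ((2 sqrt N + 1/2)(sqrt N + 1/2)^2).
   Conversely, for m = 4a^2 + 2, n = a^2 + 1 and k = a the integer is exactly 1, which gives
   ||sqrt m - sqrt n|| <= 1 / (4a^2 (4a - 1)); choosing a close to sqrt N / 2 matches the
   lower bound asymptotically. *)

From Stdlib Require Import Reals Lia Lra Psatz ZArith Zwf List ClassicalDescription.
From Coquelicot Require Import Coquelicot.
Import ListNotations.
Open Scope R_scope.

Lemma Z_rational_sqrt_is_square (a : Z) : (0 < a)%Z ->
  forall n b : Z, (b * b = n * a * a)%Z -> exists r, (0 <= r)%Z /\ n = (r * r)%Z.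
Proof.
  induction a as [a IH] using (well_founded_ind (Zwf_well_founded 0)).
  intros Ha n b Hb.
  assert (Hn : (0 <= n)%Z) by nia.
  destruct (Z.sqrt_spec n Hn) as [Hr1 Hr2].
  assert (Hr0 : (0 <= Z.sqrt n)%Z) by apply Z.sqrt_nonneg.
  set (r := Z.sqrt n) in *.
  destruct (Z.eq_dec n (r * r)) as [E | E].
  { now exists r. }
  set (c := Z.abs b).
  assert (Hc : (c * c = n * a * a)%Z) by (unfold c; nia).
  assert (Hc0 : (0 <= c)%Z) by apply Z.abs_nonneg.
  (* Descent: with r = floor (sqrt n) we get r a < c < (r + 1) a, and
     (n a - r c)^2 = n (c - r a)^2 has the smaller denominator c - r a. *)
  assert (Hlow : (r * a < c)%Z).
  { destruct (Z_lt_le_dec (r * a) c) as [h | h]; [exact h|].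
    assert (c * c <= (r * a) * (r * a))%Z by nia. nia. }
  assert (Hhigh : (c < (r + 1) * a)%Z).
  { destruct (Z_lt_le_dec c ((r + 1) * a)) as [h | h]; [exact h|].
    assert ((r + 1) * a * ((r + 1) * a) <= c * c)%Z by nia. unfold Z.succ in Hr2. nia. }
  apply (IH (c - r * a)%Z ltac:(unfold Zwf; lia) ltac:(lia) n (n * a - r * c)%Z).
  transitivity (n * (c - r * a) * (c - r * a) + (r * r - n) * (c * c - n * a * a))%Z; [ring|].
  rewrite Hc. ring.
Qed.

Lemma notZ_opp (y : R) : notZ y -> notZ (- y).
Proof. intros Hy k E. apply (Hy (- k)%Z). rewrite opp_IZR, <- E. ring. Qed.

Lemma sqr_nat_notZ_irrational (n : nat) (y : R) (j L : Z) :
  y * y = INR n -> notZ y -> j <> 0%Z -> IZR j * y <> IZR L.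
Proof.
  intros Hy HyZ Hj E.
  assert (HL : (L * L = Z.of_nat n * Z.abs j * Z.abs j)%Z).
  { apply eq_IZR. rewrite !mult_IZR, <- E, <- INR_IZR_INZ, <- Hy.
    destruct (Z.abs_spec j) as [[_ ->] | [_ ->]]; rewrite ?opp_IZR; ring. }
  destruct (Z_rational_sqrt_is_square (Z.abs j) ltac:(lia) _ _ HL) as [r [_ Hn]].
  assert (Hyr : (y - IZR r) * (y + IZR r) = 0).
  { transitivity (y * y - IZR r * IZR r); [ring|].
    rewrite Hy, INR_IZR_INZ, Hn, mult_IZR. ring. }
  destruct (Rmult_integral _ _ Hyr) as [Hr | Hr].
  - apply (HyZ r). lra.
  - apply (HyZ (- r)%Z). rewrite opp_IZR. lra.
Qed.

Lemma sqr_nat_diff_integer_eq (m n : nat) (x y : R) (j : Z) :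
  x * x = INR m -> y * y = INR n -> notZ y -> x - y = IZR j -> m = n.
Proof.
  intros Hx Hy HyZ E.
  destruct (Z.eq_dec j 0) as [-> | Hj].
  - apply INR_eq. rewrite <- Hx, <- Hy. replace x with y by (simpl in E; lra). reflexivity.
  - exfalso.
    apply (sqr_nat_notZ_irrational n y (2 * j) (Z.of_nat m - Z.of_nat n - j * j) Hy HyZ ltac:(lia)).
    rewrite !minus_IZR, !mult_IZR, <- !INR_IZR_INZ, <- Hx, <- Hy.
    replace x with (y + IZR j) by lra. ring.
Qed.

Lemma sqrt_INR_between_squares_notZ (q a : nat) :
  (a * a < q < (a + 1) * (a + 1))%nat -> notZ (sqrt (INR q)).
Proof.
  intros H k E.
  assert (Hk : (0 <= k)%Z) by (apply le_IZR; rewrite <- E; apply sqrt_pos).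
  assert (Hq : Z.of_nat q = (k * k)%Z).
  { apply eq_IZR. rewrite <- INR_IZR_INZ, mult_IZR, <- E. rewrite sqrt_sqrt; [reflexivity | apply pos_INR]. }
  destruct (Z_le_gt_dec k (Z.of_nat a)); nia.
Qed.

Lemma distZ_ge0 (z : R) : 0 <= distZ z.
Proof. unfold distZ. apply Rmin_glb; apply Rabs_pos. Qed.

Lemma distZ_le (z : R) (k : Z) : distZ z <= Rabs (z - IZR k).
Proof.
  destruct (base_Int_part z) as [H1 H2]. unfold distZ. rewrite plus_IZR.
  destruct (Z_le_gt_dec k (Int_part z)) as [h | h].
  - apply IZR_le in h. eapply Rle_trans; [apply Rmin_l|]. rewrite !Rabs_right; lra.
  - assert (h' : (Int_part z + 1 <= k)%Z) by lia.
    apply IZR_le in h'. rewrite plus_IZR in h'.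
    eapply Rle_trans; [apply Rmin_r|]. rewrite !Rabs_left1; lra.
Qed.

Lemma distZ_attained (z : R) : exists k : Z, distZ z = Rabs (z - IZR k) /\ Rabs (z - IZR k) <= 1/2.
Proof.
  destruct (base_Int_part z) as [H1 H2]. unfold distZ. rewrite plus_IZR.
  rewrite (Rabs_right (z - IZR (Int_part z))), (Rabs_left1 (z - (IZR (Int_part z) + 1))) by lra.
  destruct (Rle_dec (z - IZR (Int_part z)) (- (z - (IZR (Int_part z) + 1)))) as [h | h].
  - exists (Int_part z). rewrite Rmin_left, Rabs_right; lra.
  - exists (Int_part z + 1)%Z. rewrite Rmin_right, plus_IZR, Rabs_left1; lra.
Qed.

Lemma conjugate_factors_bound_ordered (s x y : R) : 0 <= y <= x -> x <= s ->
  (2 * y + 1/2) * (2 * x + 1/2) * (2 * (x - y) + 1/2) <= (2 * s + 1/2) * (s + 1/2) ^ 2.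
Proof.
  intros Hyx Hxs.
  assert (Hamgm : (2 * y + 1/2) * (2 * (x - y) + 1/2) <= (x + 1/2) ^ 2)
    by (pose proof (pow2_ge_0 (x - 2 * y)); nra).
  assert (Hmono : (2 * x + 1/2) * (x + 1/2) ^ 2 <= (2 * s + 1/2) * (s + 1/2) ^ 2).
  { apply Rmult_le_compat; try lra; try (apply pow_le; lra). apply pow_incr; lra. }
  eapply Rle_trans; [|exact Hmono].
  replace ((2 * y + 1/2) * (2 * x + 1/2) * (2 * (x - y) + 1/2))
    with ((2 * x + 1/2) * ((2 * y + 1/2) * (2 * (x - y) + 1/2))) by ring.
  apply Rmult_le_compat_l; lra.
Qed.

Lemma conjugate_factors_bound (s x y d : R) : 0 <= x <= s -> 0 <= y <= s -> Rabs d <= 1/2 ->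
  Rabs (2 * y + d) * Rabs (2 * x - d) * Rabs (2 * (x - y) - d) <= (2 * s + 1/2) * (s + 1/2) ^ 2.
Proof.
  intros Hx Hy Hd. apply Rabs_le_between in Hd.
  assert (B1 : Rabs (2 * y + d) <= 2 * y + 1/2) by (apply Rabs_le; lra).
  assert (B2 : Rabs (2 * x - d) <= 2 * x + 1/2) by (apply Rabs_le; lra).
  pose proof (Rabs_pos (2 * y + d)). pose proof (Rabs_pos (2 * x - d)).
  pose proof (Rabs_pos (2 * (x - y) - d)).
  destruct (Rle_dec y x) as [Hyx | Hxy].
  - assert (B3 : Rabs (2 * (x - y) - d) <= 2 * (x - y) + 1/2) by (apply Rabs_le; lra).
    eapply Rle_trans; [|apply (conjugate_factors_bound_ordered s x y); lra].
    apply Rmult_le_compat; try apply Rmult_le_compat; auto using Rmult_le_pos.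
  - assert (B3 : Rabs (2 * (x - y) - d) <= 2 * (y - x) + 1/2) by (apply Rabs_le; lra).
    eapply Rle_trans; [|apply (conjugate_factors_bound_ordered s y x); lra].
    replace ((2 * x + 1/2) * (2 * y + 1/2)) with ((2 * y + 1/2) * (2 * x + 1/2)) by ring.
    apply Rmult_le_compat; try apply Rmult_le_compat; auto using Rmult_le_pos.
Qed.

Lemma distZ_sqrt_sub_lower (N m n : nat) : (m <= N)%nat -> (n <= N)%nat -> adm m n ->
  1 <= distZ (sqrt (INR m) - sqrt (INR n)) *
       ((2 * sqrt (INR N) + 1/2) * (sqrt (INR N) + 1/2) ^ 2).
Proof.
  intros HmN HnN [Hmn [_ HnZ]].
  assert (Hx : sqrt (INR m) * sqrt (INR m) = INR m) by (apply sqrt_sqrt, pos_INR).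
  assert (Hy : sqrt (INR n) * sqrt (INR n) = INR n) by (apply sqrt_sqrt, pos_INR).
  assert (Hxs : sqrt (INR m) <= sqrt (INR N)) by (apply sqrt_le_1_alt, le_INR, HmN).
  assert (Hys : sqrt (INR n) <= sqrt (INR N)) by (apply sqrt_le_1_alt, le_INR, HnN).
  pose proof (sqrt_pos (INR m)). pose proof (sqrt_pos (INR n)).
  set (x := sqrt (INR m)) in *. set (y := sqrt (INR n)) in *. set (s := sqrt (INR N)) in *.
  assert (Hdiff : forall j, x - y <> IZR j)
    by (intros j E; exact (Hmn (sqr_nat_diff_integer_eq m n x y j Hx Hy HnZ E))).
  assert (Hsum : forall j, x + y <> IZR j).
  { intros j E. apply Hmn, (sqr_nat_diff_integer_eq m n x (- y) j Hx).
    - rewrite <- Hy. ring.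
    - apply notZ_opp, HnZ.
    - rewrite <- E. ring. }
  destruct (distZ_attained (x - y)) as [k [Ek Hk]]. rewrite Ek.
  set (d := x - y - IZR k) in *.
  set (P := ((Z.of_nat m + k * k - Z.of_nat n) * (Z.of_nat m + k * k - Z.of_nat n)
             - 4 * k * k * Z.of_nat m)%Z).
  assert (EP : IZR P = d * ((2 * y + d) * (2 * x - d) * (2 * (x - y) - d))).
  { unfold P, d.
    repeat first [rewrite minus_IZR | rewrite plus_IZR | rewrite mult_IZR].
    rewrite <- !INR_IZR_INZ, <- Hx, <- Hy. ring. }
  assert (HP0 : IZR P <> 0).
  { rewrite EP. unfold d.
    repeat apply Rmult_integral_contrapositive_currified.
    - intro E. apply (Hdiff k). lra.
    - intro E. apply (Hsum k). lra.
    - intro E. apply (Hsum (- k)%Z). rewrite opp_IZR. lra.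
    - intro E. apply (Hdiff (- k)%Z). rewrite opp_IZR. lra. }
  assert (HP : 1 <= Rabs (IZR P)).
  { rewrite <- abs_IZR. apply IZR_le.
    assert (P <> 0%Z) by (intro E; apply HP0; rewrite E; reflexivity). lia. }
  rewrite EP, !Rabs_mult in HP.
  eapply Rle_trans; [exact HP|].
  apply Rmult_le_compat_l; [apply Rabs_pos|].
  apply conjugate_factors_bound; lra.
Qed.

Lemma adm_witness (a : nat) : (1 <= a)%nat -> adm (4 * a * a + 2) (a * a + 1).
Proof.
  intro Ha. split; [lia|]. split.
  - apply (sqrt_INR_between_squares_notZ _ (2 * a)). nia.
  - apply (sqrt_INR_between_squares_notZ _ a). nia.
Qed.

Lemma distZ_witness_upper (a : nat) : (1 <= a)%nat ->
  distZ (sqrt (INR (4 * a * a + 2)) - sqrt (INR (a * a + 1))) *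
    (4 * INR a * INR a * (4 * INR a - 1)) <= 1.
Proof.
  intro Ha.
  assert (Hx : sqrt (INR (4 * a * a + 2)) ^ 2 = 4 * INR a * INR a + 2).
  { rewrite pow2_sqrt by apply pos_INR. rewrite plus_INR, !mult_INR. simpl. ring. }
  assert (Hy : sqrt (INR (a * a + 1)) ^ 2 = INR a * INR a + 1).
  { rewrite pow2_sqrt by apply pos_INR. rewrite plus_INR, !mult_INR. simpl. ring. }
  pose proof (distZ_le (sqrt (INR (4 * a * a + 2)) - sqrt (INR (a * a + 1))) (Z.of_nat a)) as D.
  rewrite <- INR_IZR_INZ in D.
  assert (Hr : 1 <= INR a) by (apply (le_INR 1); lia).
  pose proof (sqrt_pos (INR (4 * a * a + 2))). pose proof (sqrt_pos (INR (a * a + 1))).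
  set (x := sqrt (INR (4 * a * a + 2))) in *. set (y := sqrt (INR (a * a + 1))) in *.
  set (r := INR a) in *.
  set (d := x - y - r) in *.
  set (Q := (x + y - r) * (x + y + r) * (x - y + r)).
  assert (HdQ : d * Q = 1).
  { transitivity ((x ^ 2 + r * r - y ^ 2) ^ 2 - 4 * r * r * x ^ 2); [unfold d, Q; ring|].
    rewrite Hx, Hy. ring. }
  assert (Hxr : 2 * r <= x) by nra.
  assert (Hyr : r <= y <= r + 1/2) by (split; nra).
  assert (HQ : 4 * r * r * (4 * r - 1) <= Q).
  { replace (4 * r * r * (4 * r - 1)) with (2 * r * (4 * r) * (2 * r - 1/2)) by field.
    unfold Q. apply Rmult_le_compat; try apply Rmult_le_compat; nra. }
  assert (HC : 0 < 4 * r * r * (4 * r - 1)) by (apply Rmult_lt_0_compat; nra).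
  assert (Hd : 0 < d) by nra.
  eapply Rle_trans; [apply Rmult_le_compat_r; [nra | exact D]|].
  fold d. rewrite Rabs_right by lra. nra.
Qed.

Lemma fold_right_Rmin_spec (x : R) (l : list R) :
  In (fold_right Rmin x l) (x :: l) /\ forall v, In v (x :: l) -> fold_right Rmin x l <= v.
Proof.
  induction l as [|y l [IH1 IH2]]; simpl.
  - split; [now left|]. intros v [<- | []]. lra.
  - split.
    + destruct (Rle_dec y (fold_right Rmin x l)) as [h | h].
      * rewrite Rmin_left by lra. now right; left.
      * rewrite Rmin_right by lra. destruct IH1 as [h1 | h1]; [now left | now right; right].
    + intros v [<- | [<- | Hv]].
      * eapply Rle_trans; [apply Rmin_r | apply IH2; now left].
      * apply Rmin_l.
      * eapply Rle_trans; [apply Rmin_r | apply IH2; now right].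
Qed.

Lemma in_vals (N m n : nat) : (1 <= m <= N)%nat -> (1 <= n <= N)%nat -> adm m n ->
  In (distZ (sqrt (INR m) - sqrt (INR n))) (vals N).
Proof.
  intros Hm Hn Ha. unfold vals.
  apply in_flat_map. exists m. split; [apply in_seq; lia|].
  apply in_flat_map. exists n. split; [apply in_seq; lia|].
  destruct (excluded_middle_informative (adm m n)); [now left | contradiction].
Qed.

Lemma in_vals_inv (N : nat) (v : R) : In v (vals N) ->
  exists m n, (m <= N)%nat /\ (n <= N)%nat /\ adm m n /\ v = distZ (sqrt (INR m) - sqrt (INR n)).
Proof.
  unfold vals. intro H.
  apply in_flat_map in H as [m [Hm H]]. apply in_flat_map in H as [n [Hn H]].
  apply in_seq in Hm, Hn.
  destruct (excluded_middle_informative (adm m n)) as [Ha | _]; [|destruct H].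
  destruct H as [<- | []]. exists m, n. split; [lia | split; [lia | auto]].
Qed.

Lemma delta_spec (N : nat) : vals N <> [] ->
  In (delta N) (vals N) /\ forall v, In v (vals N) -> delta N <= v.
Proof. unfold delta. destruct (vals N); [tauto|]. intros _. apply fold_right_Rmin_spec. Qed.

Lemma vals_nonempty (N : nat) : (6 <= N)%nat -> vals N <> [].
Proof.
  intros HN E.
  assert (Hin := in_vals N (4 * 1 * 1 + 2) (1 * 1 + 1) ltac:(lia) ltac:(lia) (adm_witness 1 (le_n 1))).
  rewrite E in Hin. destruct Hin.
Qed.

Lemma delta_ge0 (N : nat) : 0 <= delta N.
Proof.
  destruct (list_eq_dec Req_EM_T (vals N) []) as [E | Hne].
  - unfold delta. rewrite E. lra.
  - destruct (in_vals_inv N _ (proj1 (delta_spec N Hne))) as [m [n [_ [_ [_ ->]]]]].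
    apply distZ_ge0.
Qed.

Lemma delta_lower (N : nat) : vals N <> [] ->
  1 <= delta N * ((2 * sqrt (INR N) + 1/2) * (sqrt (INR N) + 1/2) ^ 2).
Proof.
  intro Hne.
  destruct (in_vals_inv N _ (proj1 (delta_spec N Hne))) as [m [n [Hm [Hn [Ha ->]]]]].
  now apply distZ_sqrt_sub_lower.
Qed.

Lemma delta_upper (N a : nat) : (1 <= a)%nat -> (4 * a * a + 2 <= N)%nat ->
  delta N * (4 * INR a * INR a * (4 * INR a - 1)) <= 1.
Proof.
  intros Ha HaN.
  assert (Hin := in_vals N (4 * a * a + 2) (a * a + 1) ltac:(lia) ltac:(nia) (adm_witness a Ha)).
  assert (Hne : vals N <> []) by (intro E; rewrite E in Hin; destruct Hin).
  assert (HC : 0 <= 4 * INR a * INR a * (4 * INR a - 1)).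
  { assert (1 <= INR a) by (apply (le_INR 1); lia). apply Rmult_le_pos; nra. }
  eapply Rle_trans; [|apply (distZ_witness_upper a Ha)].
  apply Rmult_le_compat_r; [exact HC|]. now apply delta_spec.
Qed.

Lemma half_sqrt_witness (N : nat) : (100 <= N)%nat ->
  exists a : nat, (1 <= a)%nat /\ (4 * a * a + 2 <= N)%nat /\ sqrt (INR N) / 2 - 2 <= INR a.
Proof.
  intro HN.
  destruct (Nat.sqrt_spec N ltac:(lia)) as [Hr1 Hr2].
  set (r := Nat.sqrt N) in *.
  assert (Hr : (10 <= r)%nat) by nia.
  exists (r / 2 - 1)%nat.
  assert (Ha : (2 * (r / 2 - 1) + 2 <= r <= 2 * (r / 2 - 1) + 3)%nat).
  { pose proof (Nat.div_mod r 2 ltac:(lia)). pose proof (Nat.mod_upper_bound r 2 ltac:(lia)). lia. }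
  set (a := (r / 2 - 1)%nat) in *.
  split; [lia | split; [nia|]].
  destruct Ha as [_ Hra]. apply le_INR in Hra. apply lt_INR in Hr2.
  rewrite plus_INR, mult_INR in Hra. rewrite mult_INR, S_INR in Hr2. simpl in Hra.
  assert (Hs : sqrt (INR N) * sqrt (INR N) = INR N) by (apply sqrt_sqrt, pos_INR).
  pose proof (sqrt_pos (INR N)). pose proof (pos_INR r).
  assert (sqrt (INR N) < INR r + 1) by nra.
  lra.
Qed.

Lemma delta_ratio_eq (N : nat) : (1 <= N)%nat ->
  delta N / (1 / (2 * Rpower (INR N) (3 / 2))) = delta N * (2 * sqrt (INR N) ^ 3).
Proof.
  intro HN.
  assert (HN0 : 0 < INR N) by (apply lt_0_INR; lia).
  assert (Hs : 0 < sqrt (INR N)) by (apply sqrt_lt_R0, HN0).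
  replace (3 / 2) with (1 + / 2) by field.
  rewrite Rpower_plus, Rpower_1, Rpower_sqrt by exact HN0.
  rewrite <- (sqrt_sqrt (INR N)) at 1 by lra.
  field. lra.
Qed.

(* With s = sqrt N and t = 1/s: lower_ratio t = 2 s^3 / ((2 s + 1/2)(s + 1/2)^2) and
   upper_ratio t = 2 s^3 / (4 b^2 (4 b - 1)) for b = s/2 - 2. *)
Definition lower_ratio (t : R) : R := 2 / ((2 + t / 2) * (1 + t / 2) ^ 2).
Definition upper_ratio (t : R) : R := 2 / ((1 - 4 * t) ^ 2 * (2 - 9 * t)).

Lemma ratio_lower_bound (N : nat) : (100 <= N)%nat ->
  lower_ratio (/ sqrt (INR N)) <= delta N * (2 * sqrt (INR N) ^ 3).
Proof.
  intro HN.
  pose proof (delta_lower N (vals_nonempty N ltac:(lia))) as H.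
  assert (Hs : 0 < sqrt (INR N)) by (apply sqrt_lt_R0, lt_0_INR; lia).
  set (s := sqrt (INR N)) in *.
  set (M := (2 * s + 1/2) * (s + 1/2) ^ 2) in *.
  assert (HM : 0 < M) by (unfold M; apply Rmult_lt_0_compat; nra).
  replace (lower_ratio (/ s)) with (2 * s ^ 3 / M)
    by (unfold lower_ratio, M; field; repeat split; nra).
  apply (Rmult_le_reg_r M); [exact HM|].
  replace (2 * s ^ 3 / M * M) with (2 * s ^ 3) by (field; lra).
  replace (delta N * (2 * s ^ 3) * M) with (2 * s ^ 3 * (delta N * M)) by ring.
  rewrite <- (Rmult_1_r (2 * s ^ 3)) at 1.
  apply Rmult_le_compat_l; [nra | exact H].
Qed.

Lemma ratio_upper_bound (N : nat) : (100 <= N)%nat ->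
  delta N * (2 * sqrt (INR N) ^ 3) <= upper_ratio (/ sqrt (INR N)).
Proof.
  intro HN.
  destruct (half_sqrt_witness N HN) as [a [Ha [HaN Hsa]]].
  pose proof (delta_upper N a Ha HaN) as H.
  pose proof (delta_ge0 N) as Hd.
  assert (Hs : 10 <= sqrt (INR N)).
  { rewrite <- (sqrt_square 10) by lra. apply sqrt_le_1_alt.
    apply (le_INR 100) in HN. rewrite (INR_IZR_INZ 100) in HN. simpl in HN. lra. }
  set (s := sqrt (INR N)) in *. set (r := INR a) in *.
  set (b := s / 2 - 2) in *.
  assert (Hb : 3 <= b) by (unfold b; lra).
  set (B := 4 * b * b * (4 * b - 1)).
  assert (HB : 0 < B) by (unfold B; apply Rmult_lt_0_compat; nra).
  assert (HBr : B <= 4 * r * r * (4 * r - 1)) by (unfold B; apply Rmult_le_compat; nra).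
  replace (upper_ratio (/ s)) with (2 * s ^ 3 / B)
    by (unfold upper_ratio, B, b; field; repeat split; nra).
  apply (Rmult_le_reg_r B); [exact HB|].
  replace (2 * s ^ 3 / B * B) with (2 * s ^ 3) by (field; lra).
  replace (delta N * (2 * s ^ 3) * B) with (2 * s ^ 3 * (delta N * B)) by ring.
  rewrite <- (Rmult_1_r (2 * s ^ 3)) at 2.
  apply Rmult_le_compat_l; [nra|].
  eapply Rle_trans; [|exact H]. apply Rmult_le_compat_l; assumption.
Qed.

Lemma is_lim_seq_comp_inv_sqrt (f : R -> R) : continuity_pt f 0 ->
  is_lim_seq (fun N => f (/ sqrt (INR N))) (f 0).
Proof.
  intro Hf. apply is_lim_seq_continuous; [exact Hf|].
  apply (is_lim_seq_ext (fun N => sqrt (/ INR N))); [intro; apply sqrt_inv|].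
  rewrite <- sqrt_0. apply is_lim_seq_continuous; [apply continuity_pt_sqrt; lra|].
  replace (Finite 0) with (Rbar_inv p_infty) by reflexivity.
  apply is_lim_seq_inv; [apply is_lim_seq_INR | discriminate].
Qed.

Theorem theorem7 :
  is_lim_seq (fun N : nat => delta N / (1 / (2 * Rpower (INR N) (3 / 2)))) 1.
Proof.
  apply (is_lim_seq_le_le_loc (fun N => lower_ratio (/ sqrt (INR N))) _
                              (fun N => upper_ratio (/ sqrt (INR N)))).
  - exists 100%nat. intros N HN. rewrite delta_ratio_eq by lia.
    split; [apply ratio_lower_bound | apply ratio_upper_bound]; lia.
  - replace 1 with (lower_ratio 0) by (unfold lower_ratio; field).
    apply is_lim_seq_comp_inv_sqrt. unfold lower_ratio. reg. lra.
  - replace 1 with (upper_ratio 0) by (unfold upper_ratio; field).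
    apply is_lim_seq_comp_inv_sqrt. unfold upper_ratio. reg. lra.
Qed.
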